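(* Let there be finitely many items with feature vectors $x_i\in\mathbb{R}^d$, a linear weight vector $w\in\mathbb{R}^d$, and a probability distribution $\mathcal{P}$ on pairs $p=(i,j)$ of items. Put $b_p^{(f)}=|x_{if}-x_{jf}|$ and let \[ \mathcal F_*=\{f:\ |w_f|>0\text{ and } \mathbb P_{p\sim\mathcal P}(b_p^{(f)}>0)>0\}. \] Assume $\mathcal P$ is supported on pairs with $\sum_{k\in\mathcal F_*}b_p^{(k)}>0$. For $u=(u_f)_{f\in\mathcal F_*}\in\mathbb{R}^{\mathcal F_*}$ define \[ \rho_p^{(f)}(u)=\frac{e^{u_f}b_p^{(f)}}{\sum_{k\in\mathcal F_*}e^{u_k}b_p^{(k)}},\qquad I_f(u)=\mathbb E_{p\sim\mathcal P}[\rho_p^{(f)}(u)],\qquad I(u)=(I_f(u))_{f\in\mathcal F_*}, \] \[ \Phi(u)=\mathbb E_{p\sim\mathcal P}\Big[\log\Big(\sum_{k\in\mathcal F_*}e^{u_k}b_p^{(k)}\Big)\Big], \] and the factor competition graph $G_{\mathcal P}=(\mathcal F_*,E_{\mathcal P})$ by $\{f,g\}\in E_{\mathcal P}\iff \mathbb P_{p\sim\mathcal P}(b_p^{(f)}b_p^{(g)}>0)>0$ (for $f\ne g$). Then: (1) $I(u)=\nabla\Phi(u)$ for all $u$. (2) The Jacobian $J(u)=\nabla^2\Phi(u)$ equals $\mathbb E_p[\operatorname{Diag}(\rho_p(u))-\rho_p(u)\rho_p(u)^\top]$; in particular for $f\ne g$, $J_{fg}(u)=-\mathbb E[\rho_p^{(f)}(u)\rho_p^{(g)}(u)]\le0$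 and $J_{ff}(u)=\sum_{g\ne f}\mathbb E[\rho_p^{(f)}(u)\rho_p^{(g)}(u)]$. Hence $J(u)$ is a symmetric positive-semidefinite Laplacian-type matrix (nonpositive off-diagonal entries, zero row sums) whose off-diagonal support is contained in $E_{\mathcal P}$. (3) For all $u,u'$, with $\Delta u=u'-u$, \[ \langle\Delta u,I(u')-I(u)\rangle=\int_0^1\Delta u^\top J(u+t\Delta u)\Delta u\,dt\ \ge 0. \] (4) $I(u')=I(u)$ if and only if $\Delta u$ is constant on every connected component of $G_{\mathcal P}$. In particular, if $G_{\mathcal P}$ is connected, then $I(u')=I(u)$ if and only if $u'=u+c\mathbf 1$ for some scalar $c$.
   Context: Interpretation: $u_f=\log|w_f|$ are log-absolute linear weights; $\rho_p^{(f)}(u)$ is then the local influence share $|w_f(x_{if}-x_{jf})|/\sum_k|w_k(x_{ik}-x_{jk})|$, $I(u)$ is the global influence structure, and $I(u')-I(u)$ is Influence Exchange. $\operatorname{Diag}(v)$ is the diagonal matrix with diagonal $v$, and $\mathbf 1$ is the all-ones vector. *)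

From HB Require Import structures.
From mathcomp Require Import all_boot all_order all_algebra.
From mathcomp Require Import all_classical all_reals all_analysis.
Set Implicit Arguments. Unset Strict Implicit. Unset Printing Implicit Defensive.
Import Order.TTheory GRing.Theory Num.Theory numFieldNormedType.Exports.
Local Open Scope ring_scope.

Section Influence.
Variables (R : realType) (T : finType) (d : nat).
(* items T with feature vectors x i : R^d, weights w : R^d,
   distribution P on pairs of items (a function T*T -> R, assumed
   nonnegative and summing to 1 in the theorem). *)
Variables (x : T -> 'I_d -> R) (w : 'I_d -> R) (P : T * T -> R).

Definition bf (p : T * T) (f : 'I_d) : R := `|x p.1 f - x p.2 f|.

Definition prob (E : pred (T * T)) : R := \sum_(p | E p) P p.

Definition expect (g : T * T -> R) : R := \sum_p P p * g p.

Definition Fstar : {set 'I_d} :=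
  [set f | (0 < `|w f|) && (0 < prob (fun p => 0 < bf p f))].

(* R^{F_*} is identified with 'rV[R]_#|F_*| via the enumeration of F_*. *)
Definition nF : nat := #|Fstar|.
Definition feat (i : 'I_nF) : 'I_d := enum_val i.

Definition b (p : T * T) (i : 'I_nF) : R := bf p (feat i).

Definition Zs (u : 'rV[R]_nF) (p : T * T) : R :=
  \sum_(k < nF) expR (u 0 k) * b p k.

Definition rho (u : 'rV[R]_nF) (p : T * T) (f : 'I_nF) : R :=
  expR (u 0 f) * b p f / Zs u p.

Definition rhov (u : 'rV[R]_nF) (p : T * T) : 'rV[R]_nF := \row_f rho u p f.

Definition Infl (u : 'rV[R]_nF) : 'rV[R]_nF := \row_f expect (fun p => rho u p f).

Definition Phi (u : 'rV[R]_nF) : R := expect (fun p => ln (Zs u p)).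

Definition Jac (u : 'rV[R]_nF) : 'M[R]_nF :=
  \sum_p P p *: (diag_mx (rhov u p) - (rhov u p)^T *m rhov u p).

Definition compEdge : rel 'I_nF :=
  fun f g => (f != g) && (0 < prob (fun p => 0 < b p f * b p g)).

End Influence.

Arguments nF {R T d} x w P.
Arguments feat {R T d} x w P i.
Arguments b {R T d} x w P p i.
Arguments Zs {R T d} x w P u p.
Arguments rho {R T d} x w P u p f.
Arguments rhov {R T d} x w P u p.
Arguments Infl {R T d} x w P u.
Arguments Phi {R T d} x w P u.
Arguments Jac {R T d} x w P u.
Arguments compEdge {R T d} x w P _ _.

(* Phi averages over pairs p the log-partition functions
   u |-> ln (sum_k e^(u_k) b_p(k)).  Each has the weighted softmax rho_p as
   gradient and the covariance matrix Diag rho_p - rho_p rho_p^T of the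
   (sub)probability vector rho_p as Hessian, which gives (1) and (2); (3) is
   the fundamental theorem of calculus along the segment from u to u'.
   For (4) put c_p = ln Z_p(u') - ln Z_p(u), so that
   rho_p(u') = rho_p(u) e^(Du - c_p).  Then <Du, I(u') - I(u)> is the
   expectation of sum_f rho_p^(f)(u) (e^(y_f) - 1) y_f with y = Du - c_p, a
   sum of nonnegative terms; it vanishes iff Du = c_p on the support of every
   pair of positive probability, i.e. iff Du agrees across every edge of the
   competition graph.  Conversely, such a shift scales the numerator and the
   denominator of every rho_p by the same factor. *)

From HB Require Import structures.
From mathcomp Require Import all_boot all_order all_algebra.
From mathcomp Require Import all_classical all_reals all_analysis.
From mathcomp Require Import ring.
Set Implicit Arguments. Unset Strict Implicit. Unset Printing Implicit Defensive.
Import Order.TTheory GRing.Theory Num.Theory numFieldNormedType.Exports.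
Local Open Scope ring_scope.

Section DifferentialCalculus.
Variable R : realType.

Lemma eq_is_diff (V W : normedModType R) (f g df dg : V -> W) u :
  f =1 g -> df =1 dg -> is_diff u f df -> is_diff u g dg.
Proof. by move=> /funext <- /funext <-. Qed.

Lemma is_diff_sum (V W : normedModType R) (I : Type) (r : seq I)
    (F dF : I -> V -> W) u :
  (forall i, is_diff u (F i) (dF i)) ->
  is_diff u (fun y => \sum_(i <- r) F i y) (fun v => \sum_(i <- r) dF i v).
Proof.
move=> dF_F; elim: r => [|i r IH].
  by apply: eq_is_diff (is_diff_cst 0 u) => y; rewrite big_nil.
by apply: eq_is_diff (is_diffD (dF_F i) IH) => y; rewrite big_cons.
Qed.

Lemma is_diff_coord n (u : 'rV[R]_n) j :
  is_diff u (fun y : 'rV[R]_n => y 0 j) (fun v => v 0 j).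
Proof.
have coord_lin : linear (fun y : 'rV[R]_n => y 0 j) by move=> a y z; rewrite !mxE.
pose coord : {linear 'rV[R]_n -> R} :=
  HB.pack (fun y : 'rV[R]_n => y 0 j) (GRing.isLinear.Build _ _ _ _ _ coord_lin).
have coord_cont : continuous coord by exact: coord_continuous.
apply: DiffDef; first exact: (linear_differentiable (f := coord)).
by rewrite (diff_lin (f := coord)).
Qed.

Lemma is_diff_row (V : normedModType R) m (F dF : V -> 'rV[R]_m) u :
  (forall j, is_diff u (fun y => F y 0 j) (fun v => dF v 0 j)) ->
  is_diff u F dF.
Proof.
move=> dF_F.
have := is_diff_sum (index_enum 'I_m) (fun j =>
  is_diff_comp (dF_F j) (is_diff_scalel (F u 0 j) (delta_mx 0 j : 'rV[R]_m))).
apply: eq_is_diff => y; apply/rowP => k; rewrite summxE (bigD1 k) //= big1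
  ?mxE ?eqxx ?mulr1 ?addr0 // => j jk; by rewrite !mxE eq_sym (negbTE jk) andbF mulr0.
Qed.

Lemma is_diff_derive_comp (V : normedModType R) (f df : V -> R) (g : R -> R) g' u :
  is_diff u f df -> is_derive (f u) 1 g g' ->
  is_diff u (fun y => g (f y)) (fun v => df v * g').
Proof.
move=> df_f dg; have g_diff : is_diff (f u) g ( *:%R^~ g').
  apply: DiffDef; first by apply/derivable1_diffP; exact: ex_derive.
  by rewrite deriv1E ?derive1E ?derive_val //; exact: ex_derive.
exact: (is_diff_comp df_f g_diff).
Qed.

Lemma is_diff_inv (V : normedModType R) (f df : V -> R) u :
  is_diff u f df -> f u != 0 ->
  is_diff u (fun y => (f y)^-1) (fun v => - (f u)^-2 * df v).
Proof.
move=> df_f fu0; apply: DiffDef; first by apply: differentiableV => //; exact: ex_diff.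
by rewrite diffV ?diff_val //; exact: ex_diff.
Qed.

Lemma is_diff_line (V : normedModType R) (u D : V) (t : R) :
  is_diff t (fun s : R => u + s *: D) (fun s => s *: D).
Proof.
apply: eq_is_diff (is_diffD (is_diff_cst u t) (is_diff_scalel t D)) => s //.
by rewrite /= add0r.
Qed.

Lemma continuous_sum (T : topologicalType) (I : Type) (r : seq I)
    (F : I -> T -> R) :
  (forall i, continuous (F i)) -> continuous (fun t => \sum_(i <- r) F i t).
Proof.
move=> cF; elim: r => [|i r IH] t.
  rewrite (_ : (fun _ => _) = cst 0); first exact: cst_continuous.
  by apply/funext => s; rewrite big_nil.
rewrite (_ : (fun _ => _) = F i + fun s => \sum_(j <- r) F j s).
  exact: (continuousD (cF i t) (IH t)).
by apply/funext => s; rewrite big_cons.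
Qed.

Lemma continuousMr (T : topologicalType) (F : T -> R) (c : R) :
  continuous F -> continuous (fun t => F t * c).
Proof. by move=> cF t; apply: continuousM; [exact: cF | exact: cst_continuous]. Qed.

End DifferentialCalculus.

Section SegmentIntegral.
Variables (R : realType) (n : nat).

Lemma quad_trmx (D : 'rV[R]_n) (M : 'M[R]_n) :
  (D *m M^T *m D^T) 0 0 = (D *m M *m D^T) 0 0.
Proof.
have -> : D *m M^T *m D^T = (D *m M *m D^T)^T by rewrite !trmx_mul trmxK mulmxA.
by rewrite mxE.
Qed.

Lemma increment_integral (F : 'rV[R]_n -> 'rV[R]_n) (J : 'rV[R]_n -> 'M[R]_n)
    (u D : 'rV[R]_n) :
  (forall y, is_diff y F (fun v => v *m (J y)^T)) ->
  continuous (fun t : R => (D *m J (u + t *: D) *m D^T) 0 0) ->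
  (D *m (F (u + D) - F u)^T) 0 0 =
  Rintegral lebesgue_measure `[0%R, 1%R]
    (fun t : R => (D *m J (u + t *: D) *m D^T) 0 0).
Proof.
move=> dF; set g := fun t => _ => g_cont.
pose h t := \sum_j D 0 j * F (u + t *: D) 0 j.
have dh t : is_diff t h (fun s => s * g t).
  have := is_diff_sum (index_enum 'I_n) (fun j => is_diffZ (D 0 j)
    (is_diff_comp (is_diff_comp (is_diff_line u D t) (dF _)) (is_diff_coord _ j))).
  apply: eq_is_diff => s //=.
  rewrite /g -quad_trmx [(D *m _ *m D^T) 0 0]mxE mulr_sumr; apply: eq_bigr => j _ /=.
  rewrite fctE /= -scalemxAl mxE [D^T j 0]mxE.
  by rewrite -[LHS]/(D 0 j * _) mulrCA [D 0 j * _]mulrC.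
have h_cont : continuous h.
  by move=> t; apply: differentiable_continuous; case: (dh t).
have h'E t : derive1 h t = g t.
  by have [h_diff h'] := dh t; rewrite derive1E' // h' mul1r.
rewrite /Rintegral (@continuous_FTC2 R g h 0 1 ltr01 (continuous_subspaceT g_cont)).
- rewrite -EFinB /= /h scale1r scale0r addr0 mxE -sumrB.
  by apply: eq_bigr => j _; rewrite !mxE mulrBr.
- split.
  + by move=> t _; apply/derivable1_diffP; case: (dh t).
  + by apply: cvg_at_right_filter; exact: h_cont.
  + by apply: cvg_at_left_filter; exact: h_cont.
- by move=> t _; exact: h'E.
Qed.

End SegmentIntegral.

Section ExpInequality.
Variable R : realType.

Lemma expR_sub1_mul_ge0 (y : R) : 0 <= (expR y - 1) * y.
Proof.
have [y_ge0|y_lt0] := leP 0 y.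
  by rewrite mulr_ge0 // subr_ge0 -expR0 ler_expR.
by apply: mulr_le0; rewrite ?subr_le0 ?expR_le1 ltW.
Qed.

Lemma expR_sub1_mul_eq0 (y : R) : (expR y - 1) * y = 0 -> y = 0.
Proof.
move/eqP; rewrite mulf_eq0 => /orP[|/eqP //].
by rewrite subr_eq0 -expR0 => /eqP /expR_inj.
Qed.

End ExpInequality.

Section WeightedSoftmax.
Variables (R : realType) (n : nat) (b : 'I_n -> R).
Hypothesis b_ge0 : forall k, 0 <= b k.
Implicit Types (u v : 'rV[R]_n) (f g : 'I_n).

Definition wpartition u : R := \sum_k expR (u 0 k) * b k.

Definition wsoftmax u f : R := expR (u 0 f) * b f / wpartition u.

Lemma wpartition_ge0 u : 0 <= wpartition u.
Proof. by apply: sumr_ge0 => k _; rewrite mulr_ge0 ?expR_ge0. Qed.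

Lemma wpartition_gt0 u f : 0 < b f -> 0 < wpartition u.
Proof.
move=> bf; rewrite /wpartition (bigD1 f) //= ltr_wpDr ?mulr_gt0 ?expR_gt0 //.
by apply: sumr_ge0 => k _; rewrite mulr_ge0 ?expR_ge0.
Qed.

Lemma wpartition_cases :
  (forall u, wpartition u = 0) \/ (forall u, 0 < wpartition u).
Proof.
have [f bf|b_le0] := pickP (fun k => 0 < b k).
  by right => u; exact: wpartition_gt0 bf.
left => u; apply: big1 => k _.
by have := b_le0 k; rewrite lt0r b_ge0 andbT => /negbFE/eqP ->; rewrite mulr0.
Qed.

Lemma wsoftmax_ge0 u f : 0 <= wsoftmax u f.
Proof. by rewrite divr_ge0 ?wpartition_ge0 ?mulr_ge0 ?expR_ge0. Qed.

Lemma wsoftmax_gt0 u f : 0 < b f -> 0 < wsoftmax u f.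
Proof. by move=> bf; rewrite divr_gt0 ?mulr_gt0 ?expR_gt0 ?(wpartition_gt0 _ bf). Qed.

Lemma wsoftmax_eq0 u f : b f = 0 -> wsoftmax u f = 0.
Proof. by move=> bf0; rewrite /wsoftmax bf0 mulr0 mul0r. Qed.

Lemma sum_wsoftmax u : \sum_f wsoftmax u f = wpartition u / wpartition u.
Proof. by rewrite -mulr_suml. Qed.

Lemma sum_wsoftmax_le1 u : \sum_f wsoftmax u f <= 1.
Proof.
by rewrite sum_wsoftmax; have [->|Z0] := eqVneq (wpartition u) 0;
  rewrite ?mul0r ?divff.
Qed.

Lemma wsoftmax_mul_sum u f : wsoftmax u f * \sum_g wsoftmax u g = wsoftmax u f.
Proof.
rewrite sum_wsoftmax /wsoftmax; have [->|Z0] := eqVneq (wpartition u) 0.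
  by rewrite invr0 !mulr0.
by rewrite divff ?mulr1.
Qed.

Lemma sum_wsoftmax_mul u v :
  \sum_g wsoftmax u g * v 0 g =
  (\sum_k v 0 k * expR (u 0 k) * b k) / wpartition u.
Proof. by rewrite mulr_suml; apply: eq_bigr => g _; rewrite /wsoftmax; ring. Qed.

Lemma is_diff_wpartition u :
  is_diff u wpartition (fun v => \sum_k v 0 k * expR (u 0 k) * b k).
Proof.
have := is_diff_sum (index_enum 'I_n) (fun k => is_diffZ (b k)
  (is_diff_derive_comp (is_diff_coord u k) (is_derive_expR (u 0 k)))).
by apply: eq_is_diff => y /=; apply: eq_bigr => k _; rewrite fctE -[_ *: _]/(_ * _) mulrC.
Qed.

Lemma is_diff_wsoftmax u f :
  is_diff u (wsoftmax^~ f)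
    (fun v => wsoftmax u f * (v 0 f - \sum_g wsoftmax u g * v 0 g)).
Proof.
have [Z0 | Z_gt0] := wpartition_cases.
  have wsoftmax0 y : wsoftmax y f = 0 by rewrite /wsoftmax Z0 invr0 mulr0.
  by apply: eq_is_diff (is_diff_cst 0 u) => y; rewrite /= wsoftmax0 ?mul0r.
have := is_diffM (is_diffZ (b f)
    (is_diff_derive_comp (is_diff_coord u f) (is_derive_expR (u 0 f))))
  (is_diff_inv (is_diff_wpartition u) (lt0r_neq0 (Z_gt0 u))).
apply: eq_is_diff => y; rewrite !fctE -![b f *: _]/(b f * _).
  by rewrite /wsoftmax [b f * _]mulrC.
rewrite sum_wsoftmax_mul /wsoftmax -![_ *: _]/(_ * _).
by field; rewrite lt0r_neq0.
Qed.

Lemma is_diff_ln_wpartition u :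
  is_diff u (fun y => ln (wpartition y)) (fun v => \sum_g wsoftmax u g * v 0 g).
Proof.
have [Z0 | Z_gt0] := wpartition_cases.
  apply: eq_is_diff (is_diff_cst 0 u) => y; rewrite /= ?Z0 ?ln0 //.
  by rewrite big1 // => g _; rewrite /wsoftmax Z0 invr0 mulr0 mul0r.
have := is_diff_derive_comp (is_diff_wpartition u) (is_derive1_ln (Z_gt0 u)).
by apply: eq_is_diff => y //; rewrite sum_wsoftmax_mul.
Qed.

Lemma wsoftmax_translate u u' c :
  (forall f, 0 < b f -> u' 0 f = u 0 f + c) -> wsoftmax u' =1 wsoftmax u.
Proof.
move=> u'E.
have scaled k : expR (u' 0 k) * b k = expR c * (expR (u 0 k) * b k).
  have [bk0|bk_neq0] := eqVneq (b k) 0; first by rewrite bk0 !mulr0.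
  by rewrite u'E ?expRD 1?lt0r ?bk_neq0 ?b_ge0 //; ring.
have Z' : wpartition u' = expR c * wpartition u.
  by rewrite /wpartition mulr_sumr; apply: eq_bigr => k _; exact: scaled.
move=> f; rewrite /wsoftmax Z' scaled invfM mulrACA divff ?mul1r //.
by rewrite gt_eqF ?expR_gt0.
Qed.

Section Increment.
Variables u u' : 'rV[R]_n.
Let c := ln (wpartition u') - ln (wpartition u).

Lemma wsoftmax_shift f : 0 < wpartition u -> 0 < wpartition u' ->
  wsoftmax u' f = wsoftmax u f * expR ((u' - u) 0 f - c).
Proof.
move=> Z_gt0 Z'_gt0; rewrite /c !expRB !lnK ?posrE // !mxE expRD expRN /wsoftmax.
by field; rewrite !lt0r_neq0 ?expR_gt0.
Qed.

Lemma wsoftmax_increment : 0 < wpartition u -> 0 < wpartition u' ->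
  \sum_f (wsoftmax u' f - wsoftmax u f) * (u' - u) 0 f =
  \sum_f wsoftmax u f * ((expR ((u' - u) 0 f - c) - 1) * ((u' - u) 0 f - c)).
Proof.
move=> Z_gt0 Z'_gt0.
have mass0 : \sum_f (wsoftmax u' f - wsoftmax u f) * c = 0.
  by rewrite -mulr_suml sumrB !sum_wsoftmax !divff ?subrr ?mul0r ?lt0r_neq0.
rewrite -[LHS]subr0 -[X in _ - X]mass0 -sumrB; apply: eq_bigr => f _.
by rewrite (wsoftmax_shift f Z_gt0 Z'_gt0); ring.
Qed.

Lemma wsoftmax_increment_ge0 :
  0 <= \sum_f (wsoftmax u' f - wsoftmax u f) * (u' - u) 0 f.
Proof.
have [Z0 | Z_gt0] := wpartition_cases.
  by rewrite big1 // => f _; rewrite /wsoftmax !Z0 invr0 !mulr0 subrr mul0r.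
rewrite wsoftmax_increment //; apply: sumr_ge0 => f _.
by rewrite mulr_ge0 ?wsoftmax_ge0 ?expR_sub1_mul_ge0.
Qed.

Lemma wsoftmax_increment_eq0 f : 0 < b f ->
  \sum_g (wsoftmax u' g - wsoftmax u g) * (u' - u) 0 g = 0 ->
  (u' - u) 0 f = c.
Proof.
move=> bf; rewrite wsoftmax_increment ?(wpartition_gt0 _ bf) // => /eqP.
rewrite psumr_eq0 => [/allP/(_ f (mem_index_enum f))|g _]; last first.
  by rewrite mulr_ge0 ?wsoftmax_ge0 ?expR_sub1_mul_ge0.
rewrite mulf_eq0 (gt_eqF (wsoftmax_gt0 _ bf)) /= => /eqP/expR_sub1_mul_eq0/eqP.
by rewrite subr_eq0 => /eqP.
Qed.

End Increment.

End WeightedSoftmax.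

Section Covariance.
Variables (R : realFieldType) (n : nat).
Implicit Types (r v : 'rV[R]_n) (f g : 'I_n).

Definition covmx r : 'M[R]_n := diag_mx r - r^T *m r.

Lemma covmxE r f g : covmx r f g = r 0 f *+ (f == g) - r 0 f * r 0 g.
Proof. by rewrite !mxE big_ord1 !mxE. Qed.

Lemma trmx_covmx r : (covmx r)^T = covmx r.
Proof. by rewrite linearB /= tr_diag_mx trmx_mul trmxK. Qed.

Lemma covmx_row_sum r f : \sum_g covmx r f g = r 0 f - r 0 f * \sum_g r 0 g.
Proof.
under eq_bigr do rewrite covmxE.
rewrite sumrB mulr_sumr (bigD1 f) //= eqxx mulr1n big1 ?addr0 // => g gf.
by rewrite eq_sym (negbTE gf).
Qed.

Lemma covmx_mulmx r v f :
  (v *m covmx r) 0 f = r 0 f * (v 0 f - \sum_g r 0 g * v 0 g).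
Proof.
rewrite mxE; under eq_bigr do rewrite covmxE mulrBr.
rewrite sumrB (bigD1 f) //= eqxx mulr1n big1 ?addr0 => [|g gf]; last first.
  by rewrite (negbTE gf) mulr0.
rewrite mulrBr mulr_sumr mulrC; congr (_ - _).
by apply: eq_bigr => g _; ring.
Qed.

Lemma covmx_quad r v : (v *m covmx r *m v^T) 0 0 =
  \sum_f r 0 f * v 0 f ^+ 2 - (\sum_f r 0 f * v 0 f) ^+ 2.
Proof.
rewrite mxE; under eq_bigr do rewrite covmx_mulmx mxE.
rewrite expr2 mulr_suml -sumrB; apply: eq_bigr => f _; ring.
Qed.

Lemma covmx_psd r v : (forall f, 0 <= r 0 f) -> \sum_f r 0 f <= 1 ->
  0 <= (v *m covmx r *m v^T) 0 0.
Proof.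
move=> r_ge0 r_le1; rewrite covmx_quad; set m := \sum_f r 0 f * v 0 f.
have -> : \sum_f r 0 f * v 0 f ^+ 2 - m ^+ 2 =
    \sum_f r 0 f * (v 0 f - m) ^+ 2 + m ^+ 2 * (1 - \sum_f r 0 f).
  have expand f : r 0 f * (v 0 f - m) ^+ 2 =
      r 0 f * v 0 f ^+ 2 - 2 * m * (r 0 f * v 0 f) + m ^+ 2 * r 0 f by ring.
  rewrite (eq_bigr _ (fun f _ => expand f)) big_split sumrB /= -!mulr_sumr -/m.
  ring.
apply: addr_ge0; last by apply: mulr_ge0; rewrite ?sqr_ge0 ?subr_ge0.
by apply: sumr_ge0 => f _; apply: mulr_ge0; rewrite ?sqr_ge0.
Qed.

End Covariance.

Section Expectation.
Variables (R : realType) (T : finType) (P : T * T -> R).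
Hypothesis P_ge0 : forall p, 0 <= P p.

Lemma expect_ge0 (g : T * T -> R) : (forall p, 0 <= g p) -> 0 <= expect P g.
Proof. by move=> g_ge0; apply: sumr_ge0 => p _; rewrite mulr_ge0. Qed.

Lemma expect_eq0 (g : T * T -> R) p : (forall p, 0 <= g p) ->
  expect P g = 0 -> 0 < P p -> g p = 0.
Proof.
move=> g_ge0 /eqP; rewrite psumr_eq0 => [/allP/(_ p (mem_index_enum p))|q _].
  by rewrite mulf_eq0 => /orP[/eqP->|/eqP//]; rewrite ltxx.
by rewrite mulr_ge0.
Qed.

Lemma expect_neq0 (g : T * T -> R) : expect P g != 0 ->
  exists2 p, 0 < P p & g p != 0.
Proof.
have [p /andP[Pp gp]|none] := pickP (fun p => (0 < P p) && (g p != 0)).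
  by exists p.
case/eqP; apply: big1 => p _; have [->|Pp] := eqVneq (P p) 0; first exact: mul0r.
have := none p; rewrite lt0r Pp P_ge0 /= => /negbFE/eqP ->; exact: mulr0.
Qed.

Lemma prob_gt0 (E : pred (T * T)) :
  0 < prob P E <-> exists2 p, E p & 0 < P p.
Proof.
split => [|[p Ep Pp]].
  have [p /andP[Ep Pp] _|none] := pickP (fun p => E p && (0 < P p)).
    by exists p.
  rewrite /prob big1 ?ltxx // => p Ep; have := none p; rewrite Ep /=.
  by rewrite lt0r P_ge0 andbT => /negbFE/eqP.
rewrite /prob (bigD1 p) //= ltr_wpDr //.
by apply: sumr_ge0 => q _; exact: P_ge0.
Qed.

Lemma is_diff_expect (V : normedModType R) (G dG : T * T -> V -> R) u :
  (forall p, is_diff u (G p) (dG p)) ->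
  is_diff u (fun y => expect P (G^~ y)) (fun v => expect P (dG^~ v)).
Proof. by move=> dG_G; apply: is_diff_sum => p; exact: is_diffZ. Qed.

Lemma continuous_expect (G : T * T -> R -> R) :
  (forall p, continuous (G p)) -> continuous (fun t => expect P (G^~ t)).
Proof.
move=> cG; apply: continuous_sum => p t.
by apply: continuousM; [exact: cst_continuous | exact: cG].
Qed.

End Expectation.

Lemma connect_invariant (T : finType) (e : rel T) (A : Type) (h : T -> A) :
  (forall x y, e x y -> h x = h y) -> forall x y, connect e x y -> h x = h y.
Proof.
move=> h_e x y /connectP[s + ->]; elim: s x => [|z s IH] x //= /andP[exz zs].
by rewrite (h_e _ _ exz) IH.
Qed.

Lemma row_eq_const (R : nzRingType) n (v : 'rV[R]_n) :
  (forall f g, v 0 f = v 0 g) -> exists c, v = c *: const_mx 1.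
Proof.
case: n v => [|n] v v_const; first by exists 0; apply/rowP => -[].
by exists (v 0 0); apply/rowP => f; rewrite !mxE mulr1; exact: v_const.
Qed.

(* [Zs x w P u p] and [rho x w P u p] are by definition
   [wpartition (b x w P p) u] and [wsoftmax (b x w P p) u]. *)
Section InfluenceStructure.
Variables (R : realType) (T : finType) (d : nat).
Variables (x : T -> 'I_d -> R) (w : 'I_d -> R) (P : T * T -> R).
Hypothesis P_ge0 : forall p, 0 <= P p.
Local Notation n := (nF x w P).
Local Notation rho := (rho x w P).
Local Notation I := (Infl x w P).
Local Notation J := (Jac x w P).
Local Notation G := (compEdge x w P).
Implicit Types (u v : 'rV[R]_n) (p : T * T) (f g : 'I_n).

Lemma b_ge0 p k : 0 <= b x w P p k.
Proof. exact: normr_ge0. Qed.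

Lemma rho_ge0 u p f : 0 <= rho u p f.
Proof. exact: wsoftmax_ge0 (b_ge0 p) u f. Qed.

Lemma rho_mul_sum u p f : rho u p f * \sum_g rho u p g = rho u p f.
Proof. exact: wsoftmax_mul_sum. Qed.

Lemma rhovE u p f : rhov x w P u p 0 f = rho u p f.
Proof. by rewrite mxE. Qed.

Lemma compEdge_witness f g : G f g ->
  exists2 p, 0 < P p & 0 < b x w P p f /\ 0 < b x w P p g.
Proof.
case/andP=> _ /(prob_gt0 P_ge0) [p bfg Pp]; exists p => //.
by split; rewrite lt0r b_ge0 andbT; apply: contraTneq bfg => ->;
  rewrite ?mul0r ?mulr0 ltxx.
Qed.

Lemma compEdgeI f g p : f != g -> 0 < P p ->
  0 < b x w P p f -> 0 < b x w P p g -> G f g.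
Proof.
move=> fg Pp bf bg; rewrite /compEdge fg /=.
by apply/(prob_gt0 P_ge0); exists p; rewrite ?mulr_gt0.
Qed.

Lemma Infl_pairing u v :
  (v *m (I u)^T) 0 0 = expect P (fun p => \sum_f rho u p f * v 0 f).
Proof.
rewrite mxE; under eq_bigr do rewrite !mxE mulr_sumr.
rewrite exchange_big /=; apply: eq_bigr => p _; rewrite mulr_sumr.
by apply: eq_bigr => f _; rewrite mulrCA [v 0 f * _]mulrC.
Qed.

Lemma is_diff_Phi u : is_diff u (Phi x w P) (fun v => (v *m (I u)^T) 0 0).
Proof.
have := is_diff_expect P (fun p => is_diff_ln_wpartition (b_ge0 p) u).
by apply: eq_is_diff => // v; rewrite Infl_pairing.
Qed.

Lemma Jac_entry u f g : J u f g = expect P (fun p => covmx (rhov x w P u p) f g).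
Proof. by rewrite /Jac summxE; apply: eq_bigr => p _; rewrite mxE. Qed.

Lemma Jac_mulmx u v f :
  (v *m J u) 0 f = expect P (fun p => (v *m covmx (rhov x w P u p)) 0 f).
Proof.
by rewrite /Jac mulmx_sumr summxE; apply: eq_bigr => p _; rewrite -scalemxAr mxE.
Qed.

Lemma Jac_quad u v : (v *m J u *m v^T) 0 0 =
  expect P (fun p => (v *m covmx (rhov x w P u p) *m v^T) 0 0).
Proof.
rewrite /Jac mulmx_sumr mulmx_suml summxE; apply: eq_bigr => p _.
by rewrite -scalemxAr -scalemxAl mxE.
Qed.

Lemma trmx_Jac u : (J u)^T = J u.
Proof.
apply/matrixP => f g; rewrite mxE !Jac_entry; apply: eq_bigr => p _.
by rewrite -[in LHS]trmx_covmx mxE.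
Qed.

Lemma is_diff_Infl u : is_diff u I (fun v => v *m (J u)^T).
Proof.
apply: is_diff_row => f.
have := is_diff_expect P (fun p => is_diff_wsoftmax (b_ge0 p) u f).
apply: eq_is_diff => v; first by rewrite mxE.
rewrite trmx_Jac Jac_mulmx; apply: eq_bigr => p _; rewrite covmx_mulmx rhovE.
by under [in RHS]eq_bigr do rewrite rhovE.
Qed.

Lemma Jac_offdiag u f g : f != g ->
  J u f g = - expect P (fun p => rho u p f * rho u p g).
Proof.
move=> fg; rewrite Jac_entry -sumrN; apply: eq_bigr => p _.
by rewrite covmxE (negbTE fg) !rhovE sub0r mulrN.
Qed.

Lemma Jac_offdiag_le0 u f g : f != g -> J u f g <= 0.
Proof.
move=> fg; rewrite Jac_offdiag // oppr_le0; apply: expect_ge0 => // p.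
by rewrite mulr_ge0 ?rho_ge0.
Qed.

Lemma Jac_diag u f :
  J u f f = \sum_(g | g != f) expect P (fun p => rho u p f * rho u p g).
Proof.
rewrite Jac_entry exchange_big /=; apply: eq_bigr => p _.
rewrite -mulr_sumr covmxE eqxx mulr1n !rhovE; congr (_ * _).
have := rho_mul_sum u p f; rewrite (bigD1 f) //= mulrDr mulr_sumr.
by move=> E; rewrite -[X in X - _]E addrAC subrr add0r.
Qed.

Lemma Jac_row_sum u f : \sum_g J u f g = 0.
Proof.
under eq_bigr do rewrite Jac_entry.
rewrite exchange_big big1 // => p _; rewrite -mulr_sumr covmx_row_sum rhovE.
under eq_bigr do rewrite rhovE.
by rewrite rho_mul_sum subrr mulr0.
Qed.

Lemma Jac_psd u v : 0 <= (v *m J u *m v^T) 0 0.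
Proof.
rewrite Jac_quad; apply: expect_ge0 => // p; apply: covmx_psd => [f|].
  by rewrite rhovE rho_ge0.
by under eq_bigr do rewrite rhovE; exact: sum_wsoftmax_le1.
Qed.

Lemma Jac_support u f g : f != g -> J u f g != 0 -> G f g.
Proof.
move=> fg; rewrite Jac_offdiag // oppr_eq0 => /(expect_neq0 P_ge0) [p Pp].
rewrite mulf_eq0 negb_or => /andP[rf rg].
have b_gt0 k : rho u p k != 0 -> 0 < b x w P p k.
  apply: contraNT; rewrite lt0r b_ge0 andbT negbK => /eqP bk0.
  by apply/eqP; exact: wsoftmax_eq0.
by apply: (compEdgeI fg Pp); exact: b_gt0.
Qed.

Lemma continuous_rho_line u D p f : continuous (fun t : R => rho (u + t *: D) p f).
Proof.
move=> t; apply: differentiable_continuous.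
case: (is_diff_line u D t) => line_diff _.
case: (is_diff_wsoftmax (b_ge0 p) (u + t *: D) f) => rho_diff _.
exact: differentiable_comp line_diff rho_diff.
Qed.

Lemma continuous_Jac_quad_line u D :
  continuous (fun t : R => (D *m J (u + t *: D) *m D^T) 0 0).
Proof.
have -> : (fun t : R => (D *m J (u + t *: D) *m D^T) 0 0) =
    (fun t => expect P (fun p => \sum_f rho (u + t *: D) p f * D 0 f ^+ 2 -
                                 (\sum_f rho (u + t *: D) p f * D 0 f) ^+ 2)).
  apply/funext => t; rewrite Jac_quad; apply: eq_bigr => p _.
  by rewrite covmx_quad; under eq_bigr do rewrite rhovE;
     under [X in _ - X ^+ 2]eq_bigr do rewrite rhovE.
apply: continuous_expect => p.
have rhoD_cont f k : continuous (fun s : R => rho (u + s *: D) p f * D 0 f ^+ k).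
  by apply: continuousMr; exact: continuous_rho_line.
have mean_cont : continuous (fun s : R => \sum_f rho (u + s *: D) p f * D 0 f).
  by apply: continuous_sum => f; exact: rhoD_cont f 1%N.
move=> t; apply: (continuousB _ (continuousM (mean_cont t) (mean_cont t))).
by apply: continuous_sum => f; exact: rhoD_cont f 2%N.
Qed.

Lemma Infl_increment_integral u u' :
  ((u' - u) *m (I u' - I u)^T) 0 0 =
  Rintegral lebesgue_measure `[0%R, 1%R]
    (fun t : R => ((u' - u) *m J (u + t *: (u' - u)) *m (u' - u)^T) 0 0).
Proof.
have := increment_integral is_diff_Infl (continuous_Jac_quad_line (u:=u) (D:=u' - u)).
by rewrite [u + _]addrC subrK.
Qed.

Lemma Infl_increment u u' : ((u' - u) *m (I u' - I u)^T) 0 0 =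
  expect P (fun p => \sum_f (rho u' p f - rho u p f) * (u' - u) 0 f).
Proof.
have -> : (I u' - I u)^T = (I u')^T - (I u)^T by apply/matrixP => i j; rewrite !mxE.
rewrite mulmxBr mxE [X in _ + X]mxE !Infl_pairing -sumrB.
apply: eq_bigr => p _.
by rewrite -mulrBr -sumrB; under eq_bigr do rewrite -mulrBl.
Qed.

Lemma Infl_eqP u u' : I u' = I u <->
  (forall f g, connect G f g -> (u' - u) 0 f = (u' - u) 0 g).
Proof.
split=> [I_eq | D_const].
  pose inc p := \sum_f (rho u' p f - rho u p f) * (u' - u) 0 f.
  have inc0 p : 0 < P p -> inc p = 0.
    apply: (expect_eq0 P_ge0) => [q|]; first exact: wsoftmax_increment_ge0 (b_ge0 q) u u'.
    by rewrite /inc -Infl_increment I_eq subrr trmx0 mulmx0 mxE.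
  apply: connect_invariant => f g /compEdge_witness [p Pp [bf bg]].
  have c_eq k := wsoftmax_increment_eq0 (b_ge0 p) (u := u) (u' := u') (f := k).
  by rewrite (c_eq f bf (inc0 p Pp)) (c_eq g bg (inc0 p Pp)).
apply/rowP => f; rewrite !mxE; apply: eq_bigr => p _.
have [->|Pp] := eqVneq (P p) 0; first by rewrite !mul0r.
have P_gt0 : 0 < P p by rewrite lt0r Pp P_ge0.
congr (_ * _); have [k0 bk0|b0] := pickP (fun k => 0 < b x w P p k); last first.
  by apply: (wsoftmax_translate (b_ge0 p) (c := 0)) => k; rewrite b0.
apply: (wsoftmax_translate (b_ge0 p) (c := (u' - u) 0 k0)) => k bk.
rewrite -(D_const k k0); first by rewrite !mxE [u 0 k + _]addrC subrK.
have [->|kk0] := eqVneq k k0; first exact: connect0.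
exact/connect1/(compEdgeI kk0 P_gt0).
Qed.

End InfluenceStructure.

Theorem theorem4p6 (R : realType) (T : finType) (d : nat)
  (x : T -> 'I_d -> R) (w : 'I_d -> R) (P : T * T -> R) :
  (forall p, 0 <= P p) -> \sum_p P p = 1 ->
  (forall p, 0 < P p -> 0 < \sum_(k in Fstar x w P) bf x p k) ->
  let I := Infl x w P in
  let Phi := Phi x w P in
  let J := Jac x w P in
  let rho := rho x w P in
  let E := expect P in
  let G := compEdge x w P in
  (* (1) I = grad Phi *)
  (forall u, differentiable Phi u /\
     ('d Phi u : _ -> _) = (fun v => (v *m (I u)^T) 0 0)) /\
  (* (2) J = Jacobian of I = Hessian of Phi, and its structure *)
  (forall u, differentiable I u /\
     ('d I u : _ -> _) = (fun v => v *m (J u)^T)) /\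
  (forall u,
     (forall f g, f != g ->
        J u f g = - E (fun p => rho u p f * rho u p g) /\ J u f g <= 0) /\
     (forall f, J u f f = \sum_(g | g != f) E (fun p => rho u p f * rho u p g)) /\
     (J u)^T = J u /\
     (forall v : 'rV[R]_(nF x w P), 0 <= (v *m J u *m v^T) 0 0) /\
     (forall f, \sum_g J u f g = 0) /\
     (forall f g, f != g -> J u f g != 0 -> G f g)) /\
  (* (3) monotonicity / integral formula *)
  (forall u u',
     ((u' - u) *m (I u' - I u)^T) 0 0 =
       Rintegral lebesgue_measure `[0%R, 1%R]
         (fun t : R => ((u' - u) *m J (u + t *: (u' - u)) *m (u' - u)^T) 0 0) /\
     0 <= ((u' - u) *m (I u' - I u)^T) 0 0) /\
  (* (4) characterization of equal influence structures *)
  (forall u u', I u' = I u <->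
     (forall f g, connect G f g -> (u' - u) 0 f = (u' - u) 0 g)) /\
  ((forall f g, connect G f g) ->
     forall u u', I u' = I u <-> exists c : R, u' = u + c *: const_mx 1).
Proof.
move=> P_ge0 _ _ /=.
split; first by move=> u; case: (is_diff_Phi u).
split; first by move=> u; case: (is_diff_Infl u).
split.
  move=> u; split.
    by move=> f g fg; split; [exact: Jac_offdiag | exact: Jac_offdiag_le0].
  split; first exact: Jac_diag.
  split; first exact: trmx_Jac.
  split; first exact: Jac_psd.
  split; first exact: Jac_row_sum.
  exact: Jac_support.
split.
  move=> u u'; rewrite Infl_increment_integral; split=> //.
  by apply: Rintegral_ge0 => t _; exact: Jac_psd.
split; first exact: Infl_eqP.
move=> G_conn u u'; split=> [/(Infl_eqP P_ge0) D_const | [c ->]].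
  have [c Dc] := row_eq_const (fun f g => D_const f g (G_conn f g)).
  by exists c; rewrite -Dc addrC subrK.
by apply/(Infl_eqP P_ge0) => f g _; rewrite addrC addKr !mxE.
Qed.
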